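(* Let $(A,B)$ be a complete bipartite graph with parts $A$ and $B$, $|A|,|B|>2$, whose edges are coloured red and blue so that every vertex of $A$ is incident to at least one blue edge and every vertex of $B$ is incident to at least one red edge. Then $(A,B)$ contains a cycle of length $4$ whose edges are alternately red and blue. *)

From mathcomp Require Import all_boot.
Set Implicit Arguments. Unset Strict Implicit. Unset Printing Implicit Defensive.

(* The complete bipartite graph (A,B) has vertex parts the finite types A and B
   and an edge ab for every a : A, b : B.  A red/blue edge colouring is a map
   col : A -> B -> colour. *)
Inductive colour := Red | Blue.

(* Every
   4-cycle of K_{A,B} has this shape a1 b1 a2 b2, and an alternating one can be
   labelled so that the edge a1b1 is red. *)
Definition alternating_C4 (A B : finType) (col : A -> B -> colour) : Prop :=
  exists (a1 a2 : A) (b1 b2 : B),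
    a1 <> a2 /\ b1 <> b2 /\
    col a1 b1 = Red /\ col a2 b1 = Blue /\
    col a2 b2 = Red /\ col a1 b2 = Blue.

From mathcomp Require Import all_boot.

Set Implicit Arguments.
Unset Strict Implicit.
Unset Printing Implicit Defensive.

(* Choose a vertex a of A with a largest red neighbourhood N(a) and a blue edge
   ab.  Some a' is joined to b by a red edge, so N(a') is not contained in N(a);
   as #|N(a')| <= #|N(a)|, neither is N(a) contained in N(a').  Two vertices
   with incomparable red neighbourhoods span an alternating 4-cycle. *)

Lemma card_geq_subset_sym (T : finType) (X Y : {pred T}) :
  #|Y| <= #|X| -> X \subset Y -> Y \subset X.
Proof. by move=> leYX /subset_leqif_card[leXY <-]; rewrite eqn_leq leXY leYX. Qed.

Definition is_red (c : colour) : bool := if c is Red then true else false.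

Lemma is_redP (c : colour) : reflect (c = Red) (is_red c).
Proof. by case: c; constructor. Qed.

Lemma not_is_red (c : colour) : ~~ is_red c -> c = Blue.
Proof. by case: c. Qed.

Section RedNeighbourhoods.

Variables (A B : finType) (col : A -> B -> colour).

Definition red_nbhd (a : A) : {set B} := [set b | is_red (col a b)].

Lemma alternating_C4_of_incomparable (a1 a2 : A) :
  ~~ (red_nbhd a1 \subset red_nbhd a2) -> ~~ (red_nbhd a2 \subset red_nbhd a1) ->
  alternating_C4 col.
Proof.
case/subsetPn=> b1; rewrite !inE => /is_redP red11 /not_is_red blue21.
case/subsetPn=> b2; rewrite !inE => /is_redP red22 /not_is_red blue12.
exists a1, a2, b1, b2; do !split=> //.
- by move=> eq_a; rewrite -eq_a red11 in blue21.
- by move=> eq_b; rewrite eq_b red22 in blue21.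
Qed.

End RedNeighbourhoods.

Theorem proposition2p3 (A B : finType) (col : A -> B -> colour) :
  2 < #|A| -> 2 < #|B| ->
  (forall a : A, exists b : B, col a b = Blue) ->
  (forall b : B, exists a : A, col a b = Red) ->
  alternating_C4 col.
Proof.
move=> gt2A _ blueA redB.
have [a0 _] := card_gt0P (leq_ltn_trans (leq0n 2) gt2A).
case: (arg_maxnP (fun a => #|red_nbhd col a|) (isT : predT a0)) => a _ maxa.
have [b blue_ab] := blueA a; have [a' red_a'b] := redB b.
have not_sub_a'a : ~~ (red_nbhd col a' \subset red_nbhd col a).
  by apply/subsetPn; exists b; rewrite !inE ?red_a'b ?blue_ab.
apply: (alternating_C4_of_incomparable _ not_sub_a'a).
by apply: contra not_sub_a'a; apply: card_geq_subset_sym; apply: maxa.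
Qed.
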